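(* Let $g^{ij}(x)$ and $\Gamma^{ij}_k(x)$, $i,j,k=1,\dots,n$, be functions of coordinates $x^1,\dots,x^n$ which satisfy conditions (i)–(v) of the context (no non-degeneracy of $g$ assumed). Suppose that all components $g^{ij}$ and $\Gamma^{ij}_k$ depend linearly (i.e. affinely) on one coordinate $x^\bullet$, that is $\partial_\bullet^2g^{ij}=0$ and $\partial_\bullet^2\Gamma^{ij}_k=0$, where $\partial_\bullet=\partial/\partial x^\bullet$. Then for every constant $\lambda$ the pair $$\big(g^{ij}+\lambda\,\partial_\bullet g^{ij},\ \Gamma^{ij}_k+\lambda\,\partial_\bullet\Gamma^{ij}_k\big)$$ also satisfies conditions (i)–(v). Consequently the pairs $(g,\Gamma)$ and $(\partial_\bullet g,\partial_\bullet\Gamma)$ define compatible (possibly degenerate) Hamiltonian structures of hydrodynamic type, i.e. a bi-Hamiltonian structure.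
   Context: Conditions on a pair $(g^{ij},\Gamma^{ij}_k)$ (summation over repeated indices): (i) $g^{ij}=g^{ji}$; (ii) $\partial g^{ij}/\partial x^k=\Gamma^{ij}_k+\Gamma^{ji}_k$; (iii) $g^{ij}\Gamma^{rs}_i=g^{ri}\Gamma^{js}_i$; (iv) $\Gamma^{ij}_t\Gamma^{tk}_r-\Gamma^{ik}_t\Gamma^{tj}_r=g^{ti}\big(\partial\Gamma^{jk}_r/\partial x^t-\partial\Gamma^{jk}_t/\partial x^r\big)$; (v) $\sum_{\text{cyclic in }i,j,k}\Big[\big(\frac{\partial\Gamma^{ij}_t}{\partial x^q}-\frac{\partial\Gamma^{ij}_q}{\partial x^t}\big)\Gamma^{tk}_r+\big(\frac{\partial\Gamma^{ij}_t}{\partial x^r}-\frac{\partial\Gamma^{ij}_r}{\partial x^t}\big)\Gamma^{tk}_q\Big]=0$. These are necessary and sufficient for the bracket $\{x^i(\sigma),x^j(\sigma')\}=g^{ij}\delta'(\sigma-\sigma')+\Gamma^{ij}_kx^k_\sigma\delta(\sigma-\sigma')$ of fields $x^i(\sigma)$ to be Poisson (a ''Hamiltonian structure'', possibly degenerate). Two such structures are compatible if every linear combination $\{,\}_1+\lambda\{,\}_2$ is again a Hamiltonian structure. *)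

From HB Require Import structures.
From mathcomp Require Import all_boot all_order all_algebra.
From mathcomp Require Import all_classical all_reals all_analysis.
Set Implicit Arguments. Unset Strict Implicit. Unset Printing Implicit Defensive.
Import Order.TTheory GRing.Theory Num.Theory.
Import numFieldNormedType.Exports.
Local Open Scope ring_scope.

Section Defs.
Variables (R : realType) (n : nat).

Definition coord_vec (k : 'I_n) : 'rV[R]_n := delta_mx 0 k.

Definition pd (k : 'I_n) (f : 'rV[R]_n -> R) : 'rV[R]_n -> R :=
  fun x => derive f x (coord_vec k).

Definition iter_pd (s : seq 'I_n) (f : 'rV[R]_n -> R) : 'rV[R]_n -> R :=
  foldr pd f s.

Definition smooth (f : 'rV[R]_n -> R) : Prop :=
  forall s : seq 'I_n, continuous (iter_pd s f) /\
    forall (k : 'I_n) (x : 'rV[R]_n), derivable (iter_pd s f) x (coord_vec k).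

(* g i j = g^{ij},  G i j k = Gamma^{ij}_k *)
Definition hamiltonian_structure
    (g : 'I_n -> 'I_n -> 'rV[R]_n -> R)
    (G : 'I_n -> 'I_n -> 'I_n -> 'rV[R]_n -> R) : Prop :=
  forall x : 'rV[R]_n,
  (forall i j, g i j x = g j i x) /\
  (forall i j k, pd k (g i j) x = G i j k x + G j i k x) /\
  (forall j r s, \sum_(i < n) g i j x * G r s i x = \sum_(i < n) g r i x * G j s i x) /\
  (forall i j k r,
     \sum_(t < n) (G i j t x * G t k r x - G i k t x * G t j r x)
     = \sum_(t < n) g t i x * (pd t (G j k r) x - pd r (G j k t) x)) /\
  (forall i j k q r,
     let term a b c :=
       \sum_(t < n) ((pd q (G a b t) x - pd t (G a b q) x) * G t c r x
                    + (pd r (G a b t) x - pd t (G a b r) x) * G t c q x) in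
     term i j k + term j k i + term k i j = 0).

Definition pencil_g (lam : R) (g1 g2 : 'I_n -> 'I_n -> 'rV[R]_n -> R) :=
  fun i j x => g1 i j x + lam * g2 i j x.
Definition pencil_G (lam : R) (G1 G2 : 'I_n -> 'I_n -> 'I_n -> 'rV[R]_n -> R) :=
  fun i j k x => G1 i j k x + lam * G2 i j k x.

Definition compatible g1 G1 g2 G2 : Prop :=
  hamiltonian_structure g1 G1 /\ hamiltonian_structure g2 G2 /\
  forall lam : R, hamiltonian_structure (pencil_g lam g1 g2) (pencil_G lam G1 G2).

End Defs.

From HB Require Import structures.
From mathcomp Require Import all_boot all_order all_algebra.
From mathcomp Require Import all_classical all_reals all_analysis.
From mathcomp Require Import ring lra.
Set Implicit Arguments.
Unset Strict Implicit.
Unset Printing Implicit Defensive.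
Import Order.TTheory GRing.Theory Num.Theory.
Import numFieldNormedType.Exports.
Local Open Scope ring_scope.

(* Affine dependence on x^b means f (x + lam e_b) = f x + lam * pd b f x, so the
   pencil (g + lam pd_b g, G + lam pd_b G) is the translate of (g, G) by lam e_b.
   Conditions (i)-(v) are invariant under translations, hence hold along the
   whole pencil.  Evaluated on a pencil, each condition is a polynomial of degree
   at most two in lam whose lam^2 coefficient is the same condition for the
   second member (pd_b g, pd_b G); the second difference at lam = 1, -1, 0
   isolates that coefficient, so the second member is Hamiltonian as well. *)

Lemma second_difference_sum_eq0 {R : numDomainType} {I : finType}
    {P : R -> I -> R} {c : I -> R} :
  (forall l, \sum_i P l i = 0) ->
  (forall i, P 1 i + P (-1) i - 2 * P 0 i = 2 * c i) ->
  \sum_i c i = 0.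
Proof.
move=> P_eq0 d2P.
have : 2 * \sum_i c i = 0.
  rewrite mulr_sumr -(eq_bigr _ (fun i _ => d2P i)) sumrB big_split /=.
  by rewrite -mulr_sumr !P_eq0 mulr0 !addr0 subr0.
by move/eqP; rewrite mulf_eq0 pnatr_eq0 => /eqP.
Qed.

Section DerivativeAlongLine.
Variables (R : realType) (V : normedModType R).
Implicit Types (f : V -> R) (e x : V).

Lemma is_derive_line f e x t : derivable f (t *: e + x) e ->
  is_derive t (1 : R) (fun s => f (s *: e + x)) ('D_e f (t *: e + x)).
Proof.
have quotientE : (fun h : R => h^-1 *: (((fun s => f (s *: e + x)) \o shift t) (h *: 1)
                                        - f (t *: e + x)))
    = (fun h : R => h^-1 *: ((f \o shift (t *: e + x)) (h *: e) - f (t *: e + x))).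
  by apply/funext => h /=; rewrite -[h%:A]/(h * 1) mulr1 scalerDl addrA.
by move=> df; split; rewrite /derivable /derive quotientE.
Qed.

Lemma affine_of_constant_derive (p : R -> R) (c : R) :
  (forall s, is_derive s (1 : R) p c) -> forall l, p l = p 0 + l * c.
Proof.
move=> dp l.
have dq s : is_derive s (1 : R) (fun s => p s - s * c) 0.
  have -> : (fun s => p s - s * c) = p - c \*: id.
    by apply/funext => y /=; rewrite mulrC.
  have dlin : is_derive s (1 : R) (c \*: id) c.
    by rewrite -[X in is_derive _ _ _ X]mulr1; exact: is_deriveZ.
  by rewrite -(subrr c); exact: is_deriveB.
have := is_derive_0_is_cst l 0 dq.
by rewrite mul0r subr0 => <-; rewrite subrK.
Qed.

Lemma affine_along f e :
  (forall x, derivable f x e) -> (forall x, derivable ('D_e f) x e) ->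
  (forall x, 'D_e ('D_e f) x = 0) ->
  forall l x, f (l *: e + x) = f x + l * 'D_e f x.
Proof.
move=> df ddf dd0 l x.
have D_const s : 'D_e f (s *: e + x) = 'D_e f x.
  have dD t : is_derive t (1 : R) (fun s => 'D_e f (s *: e + x)) 0.
    by rewrite -(dd0 (t *: e + x)); exact/is_derive_line/ddf.
  by rewrite (affine_of_constant_derive dD) scale0r add0r mulr0 addr0.
have df_line s : is_derive s (1 : R) (fun s => f (s *: e + x)) ('D_e f x).
  by rewrite -(D_const s); exact/is_derive_line/df.
by rewrite (affine_of_constant_derive df_line) scale0r add0r.
Qed.

End DerivativeAlongLine.

Section PartialDerivatives.
Variables (R : realType) (n : nat).
Implicit Types (f h : 'rV[R]_n -> R) (a : 'rV[R]_n).
Implicit Types (g : 'I_n -> 'I_n -> 'rV[R]_n -> R).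
Implicit Types (G : 'I_n -> 'I_n -> 'I_n -> 'rV[R]_n -> R).

Lemma smooth_pd f k : smooth f -> smooth (pd k f).
Proof. by move=> sf s; have := sf (s ++ [:: k]); rewrite /iter_pd foldr_cat. Qed.

Lemma smooth_derivable f : smooth f -> forall x k, derivable f x (coord_vec R k).
Proof. by move=> sf x k; exact: (sf [::]).2. Qed.

Lemma pd_pencil_shift f b : smooth f -> (forall x, pd b (pd b f) x = 0) ->
  forall lam, (fun x => f x + lam * pd b f x) = (fun x => f (lam *: coord_vec R b + x)).
Proof.
move=> sf f_lin lam; apply/funext => x.
by rewrite (affine_along (smooth_derivable sf ^~ b) (smooth_derivable (smooth_pd b sf) ^~ b) f_lin).
Qed.

Lemma pd_shift f a k x : pd k (fun y => f (a + y)) x = pd k f (a + x).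
Proof.
rewrite /pd /derive.
have quotientE :
    (fun h : R => h^-1 *: (((fun y => f (a + y)) \o shift x) (h *: coord_vec R k) - f (a + x)))
    = (fun h : R => h^-1 *: ((f \o shift (a + x)) (h *: coord_vec R k) - f (a + x))).
  by apply/funext => h /=; rewrite addrCA.
by rewrite quotientE.
Qed.

Lemma pd_add_scale f h (l : R) k x :
  derivable f x (coord_vec R k) -> derivable h x (coord_vec R k) ->
  pd k (fun y => f y + l * h y) x = pd k f x + l * pd k h x.
Proof.
move=> df dh; rewrite /pd -[fun y => _]/(f + l \*: h).
by rewrite (deriveD df (derivableZ (k := l) dh)) deriveZ.
Qed.

Lemma hamiltonian_structure_shift g G a :
  hamiltonian_structure g G ->
  hamiltonian_structure (fun i j x => g i j (a + x)) (fun i j k x => G i j k (a + x)).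
Proof.
move=> HS x; have [sym [dg [cond3 [cond4 cond5]]]] := HS (a + x).
split; first exact: sym.
split; first by move=> i j k; rewrite pd_shift.
split; first exact: cond3.
split.
  by move=> i j k r; rewrite cond4; apply: eq_bigr => t _; rewrite !pd_shift.
move=> i j k q r /=; rewrite -[RHS](cond5 i j k q r) /=.
apply: (f_equal2 +%R); first apply: (f_equal2 +%R).
all: by apply: eq_bigr => t _; rewrite !pd_shift.
Qed.

End PartialDerivatives.

Definition cond_v_summand {R : realType} {n : nat}
    (G : 'I_n -> 'I_n -> 'I_n -> 'rV[R]_n -> R) x (i j k q r t : 'I_n) : R :=
  let term a b c := (pd q (G a b t) x - pd t (G a b q) x) * G t c r x
                    + (pd r (G a b t) x - pd t (G a b r) x) * G t c q x in
  term i j k + term j k i + term k i j.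

Section PencilSecondMember.
Variables (R : realType) (n : nat).
Variables (g1 g2 : 'I_n -> 'I_n -> 'rV[R]_n -> R).
Variables (G1 G2 : 'I_n -> 'I_n -> 'I_n -> 'rV[R]_n -> R).
Hypothesis g1_derivable : forall i j x k, derivable (g1 i j) x (coord_vec R k).
Hypothesis g2_derivable : forall i j x k, derivable (g2 i j) x (coord_vec R k).
Hypothesis G1_derivable : forall i j l x k, derivable (G1 i j l) x (coord_vec R k).
Hypothesis G2_derivable : forall i j l x k, derivable (G2 i j l) x (coord_vec R k).
Hypothesis pencil_hamiltonian :
  forall lam, hamiltonian_structure (pencil_g lam g1 g2) (pencil_G lam G1 G2).

Local Notation gl l := (pencil_g l g1 g2).
Local Notation Gl l := (pencil_G l G1 G2).

Let pd_pencil_g l i j k x : pd k (gl l i j) x = pd k (g1 i j) x + l * pd k (g2 i j) x.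
Proof. exact: pd_add_scale. Qed.

Let pd_pencil_G l i j m k x :
  pd k (Gl l i j m) x = pd k (G1 i j m) x + l * pd k (G2 i j m) x.
Proof. exact: pd_add_scale. Qed.

Let cond_v_summand_pencil x i j k q r t :
  cond_v_summand (Gl 1) x i j k q r t + cond_v_summand (Gl (-1)) x i j k q r t
  - 2 * cond_v_summand (Gl 0) x i j k q r t = 2 * cond_v_summand G2 x i j k q r t.
Proof.
rewrite /cond_v_summand /= !pd_pencil_G /pencil_G.
(* Generalizing [pd] keeps [ring] from unfolding derivatives when comparing atoms. *)
move: (@pd R n) => D; ring.
Qed.

Lemma hamiltonian_pencil_second : hamiltonian_structure g2 G2.
Proof.
move=> x; split; [|split; [|split; [|split]]].
- move=> i j; have [sym0 _] := pencil_hamiltonian 0 x.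
  have [sym1 _] := pencil_hamiltonian 1 x.
  by move: (sym0 i j) (sym1 i j); rewrite /pencil_g; lra.
- move=> i j k; have [_ [dg0 _]] := pencil_hamiltonian 0 x.
  have [_ [dg1 _]] := pencil_hamiltonian 1 x.
  by move: (dg0 i j k) (dg1 i j k); rewrite !pd_pencil_g /pencil_G; lra.
- move=> j r s; apply/eqP; rewrite -subr_eq0 -sumrB; apply/eqP.
  apply: (second_difference_sum_eq0
    (P := fun l i => gl l i j x * Gl l r s i x - gl l r i x * Gl l j s i x)) => [l|i].
    by have [_ [_ [cond3 _]]] := pencil_hamiltonian l x; rewrite sumrB cond3 subrr.
  by rewrite /pencil_g /pencil_G; ring.
- move=> i j k r; apply/eqP; rewrite -subr_eq0 -sumrB; apply/eqP.
  apply: (second_difference_sum_eq0 (P := fun l t =>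
    Gl l i j t x * Gl l t k r x - Gl l i k t x * Gl l t j r x
    - gl l t i x * (pd t (Gl l j k r) x - pd r (Gl l j k t) x))) => [l|t].
    by have [_ [_ [_ [cond4 _]]]] := pencil_hamiltonian l x; rewrite sumrB cond4 subrr.
  by rewrite /= !pd_pencil_G /pencil_g /pencil_G; ring.
- move=> i j k q r /=; rewrite -!big_split.
  apply: (second_difference_sum_eq0 (P := fun l => cond_v_summand (Gl l) x i j k q r)
                                    (c := cond_v_summand G2 x i j k q r)) => [l|t].
    have [_ [_ [_ [_ cond5]]]] := pencil_hamiltonian l x.
    by move: (cond5 i j k q r); rewrite /= -!big_split.
  exact: cond_v_summand_pencil.
Qed.

End PencilSecondMember.

Lemma hamiltonian_affine_pencil (R : realType) (n : nat)
    (g : 'I_n -> 'I_n -> 'rV[R]_n -> R) (G : 'I_n -> 'I_n -> 'I_n -> 'rV[R]_n -> R)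
    (b : 'I_n) :
  (forall i j, smooth (g i j)) -> (forall i j k, smooth (G i j k)) ->
  (forall i j x, pd b (pd b (g i j)) x = 0) ->
  (forall i j k x, pd b (pd b (G i j k)) x = 0) ->
  hamiltonian_structure g G ->
  forall lam, hamiltonian_structure (pencil_g lam g (fun i j => pd b (g i j)))
                                    (pencil_G lam G (fun i j k => pd b (G i j k))).
Proof.
move=> g_smooth G_smooth g_lin G_lin HS lam.
have -> : pencil_g lam g (fun i j => pd b (g i j))
          = fun i j x => g i j (lam *: coord_vec R b + x).
  by apply/funext => i; apply/funext => j; exact: pd_pencil_shift.
have -> : pencil_G lam G (fun i j k => pd b (G i j k))
          = fun i j k x => G i j k (lam *: coord_vec R b + x).
  by apply/funext => i; apply/funext => j; apply/funext => k; exact: pd_pencil_shift.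
exact: hamiltonian_structure_shift.
Qed.

Theorem lemma8 (R : realType) (n : nat)
    (g : 'I_n -> 'I_n -> 'rV[R]_n -> R)
    (G : 'I_n -> 'I_n -> 'I_n -> 'rV[R]_n -> R)
    (b : 'I_n)
    (g_smooth : forall i j, smooth (g i j))
    (G_smooth : forall i j k, smooth (G i j k))
    (HS : hamiltonian_structure g G)
    (g_lin : forall i j x, pd b (pd b (g i j)) x = 0)
    (G_lin : forall i j k x, pd b (pd b (G i j k)) x = 0) :
  (forall lam : R,
     hamiltonian_structure
       (fun i j x => g i j x + lam * pd b (g i j) x)
       (fun i j k x => G i j k x + lam * pd b (G i j k) x)) /\
  compatible g G (fun i j => pd b (g i j)) (fun i j k => pd b (G i j k)).
Proof.
have pencil_ham := hamiltonian_affine_pencil g_smooth G_smooth g_lin G_lin HS.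
split; first exact: pencil_ham.
split; first exact: HS.
split; last exact: pencil_ham.
apply: (hamiltonian_pencil_second
          (fun i j => smooth_derivable (g_smooth i j))
          (fun i j => smooth_derivable (smooth_pd b (g_smooth i j)))
          (fun i j k => smooth_derivable (G_smooth i j k))
          (fun i j k => smooth_derivable (smooth_pd b (G_smooth i j k)))
          pencil_ham).
Qed.
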